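(* Let $\mathcal C$ be a subcategory of the category of groups, let $\mathcal H$ be a class of maps for $\mathcal C$, and let $\Gamma$ be an $\mathcal H$-invariant subgroup function on $\mathcal C$. Then for every $A\in\mathcal C$, $\Gamma_S(A)$ is a normal subgroup of $A$, and $\Gamma_S$ is an $\mathcal H$-invariant subgroup function, i.e. $f(\Gamma_S(A))\subset\Gamma_S(B)$ for every $f:A\to B$ in $\mathcal H$. Moreover, let $\mathcal H=\{\mathcal H^n\}_{n\ge0}$ be a collection of classes of maps for $\mathcal C$ with $\mathcal H^{n+1}\subseteq\mathcal H^n$ for all $n$, and let $\{\Gamma^n\}_{n\ge 0}$ be an $\mathcal H$-invariant series. Then $\{\Gamma^n_S\}_{n\ge0}$ is an $\mathcal H$-invariant series; that is, $\Gamma^0_S(A)=A$, $\Gamma^{n+1}_S(A)\subset\Gamma^n_S(A)$ for all $n$ and all $A\in\mathcal C$, each $\Gamma^n_S(A)$ is normal in $A$, and $f(\Gamma^n_S(A))\subset\Gamma^n_S(B)$ whenever $f:A\to B$ lies in $\mathcal H^n$.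
   Context: A subgroup function on $\mathcal C$ assigns to each $A\in\mathcal C$ a normal subgroup $\Gamma(A)\trianglelefteq A$. A series on $\mathcal C$ is a collection $\{\Gamma^n\}_{n\ge0}$ of subgroup functions with $\{e\}\subset\dots\subset\Gamma^{n+1}(A)\subset\Gamma^n(A)\subset\dots\subset\Gamma^0(A)=A$ for all $A$. A class of maps for $\mathcal C$ is a set $\mathcal H$ of morphisms of $\mathcal C$ that contains all isomorphisms, is closed under composition, and is closed under nudge-outs: whenever $f:A\to B$ and $f':A\to B'$ lie in $\mathcal H$, there exist a group $C$ and $g:B\to C$, $g':B'\to C$ in $\mathcal H$ with $g\circ f=g'\circ f'$. A subgroup function $\Gamma$ is $\mathcal H$-invariant if $f(\Gamma(A))\subset\Gamma(B)$ for every $f:A\to B$ in $\mathcal H$; a series $\{\Gamma^n\}$ is $\mathcal H=\{\mathcal H^n\}$-invariant if each $\Gamma^n$ is $\mathcal H^n$-invariant. The stabilization of $\Gamma$ with respect to $\mathcal H$ is $\Gamma_S(A)=\{a\in A\mid \exists f:A\to B,\ f\in\mathcal H,\ f(a)\in\Gamma(B)\}$; for a series, $\Gamma^n_S$ is the stabilization of $\Gamma^n$ with respect to $\mathcal H^n$. *)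

Set Implicit Arguments.

Record group := Group {
  gcar :> Type;
  gmul : gcar -> gcar -> gcar;
  ginv : gcar -> gcar;
  gone : gcar;
  gmulA : forall x y z, gmul x (gmul y z) = gmul (gmul x y) z;
  gmul1l : forall x, gmul gone x = x;
  gmul1r : forall x, gmul x gone = x;
  gmulVl : forall x, gmul (ginv x) x = gone;
  gmulVr : forall x, gmul x (ginv x) = gone
}.

Definition is_hom (A B : group) (f : A -> B) : Prop :=
  forall x y, f (gmul A x y) = gmul B (f x) (f y).

Definition maps := forall A B : group, (gcar A -> gcar B) -> Prop.

Record subcat := Subcat {
  ob : group -> Prop;
  hom : maps;
  hom_ob : forall A B f, hom A B f -> ob A /\ ob B;
  hom_is_hom : forall A B f, hom A B f -> is_hom A B f;
  hom_id : forall A, ob A -> hom A A (fun x => x);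
  hom_comp : forall A B D f g, hom A B f -> hom B D g ->
               hom A D (fun x => g (f x))
}.

Definition is_iso (C : subcat) (A B : group) (f : A -> B) : Prop :=
  hom C A B f /\ exists g : B -> A, hom C B A g /\
    (forall a, g (f a) = a) /\ (forall b, f (g b) = b).

Definition class_of_maps (C : subcat) (H : maps) : Prop :=
  (forall A B f, H A B f -> hom C A B f) /\
  (forall A B f, is_iso C A B f -> H A B f) /\
  (forall A B D f g, H A B f -> H B D g -> H A D (fun x => g (f x))) /\
  (forall A B B' f f', H A B f -> H A B' f' ->
     exists (D : group) (g : B -> D) (g' : B' -> D),
       H B D g /\ H B' D g' /\ forall a, g (f a) = g' (f' a)).

Definition is_normal_subgroup (A : group) (S : A -> Prop) : Prop :=
  S (gone A) /\
  (forall x y, S x -> S y -> S (gmul A x y)) /\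
  (forall x, S x -> S (ginv A x)) /\
  (forall x a, S a -> S (gmul A (gmul A (ginv A x) a) x)).

Definition subgroup_fun := forall A : group, gcar A -> Prop.

Definition is_subgroup_function (C : subcat) (G : subgroup_fun) : Prop :=
  forall A, ob C A -> is_normal_subgroup A (G A).

Definition invariant (H : maps) (G : subgroup_fun) : Prop :=
  forall A B f, H A B f -> forall a, G A a -> G B (f a).

Definition stab (H : maps) (G : subgroup_fun) : subgroup_fun :=
  fun A a => exists (B : group) (f : A -> B), H A B f /\ G B (f a).

Definition is_series (C : subcat) (G : nat -> subgroup_fun) : Prop :=
  (forall n, is_subgroup_function C (G n)) /\
  (forall A, ob C A -> forall a, G 0 A a) /\
  (forall n A, ob C A -> forall a, G (S n) A a -> G n A a).

Definition series_invariant (H : nat -> maps) (G : nat -> subgroup_fun) : Prop :=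
  forall n, invariant (H n) (G n).


Set Implicit Arguments.

(* Membership of a in the stabilization is witnessed by one map f of H with
   f a in G.  Inverses and conjugates keep the same witness, since f is a
   homomorphism into a group where G is normal.  Two witnesses f, f' out of the
   same group are merged by a nudge-out g f = g' f', and H-invariance of G
   transports membership along g and g'; this gives closure under products,
   and the same argument applied to a map of H and a witness gives the
   H-invariance of the stabilization. *)

Lemma hom_one (A B : group) (f : A -> B) : is_hom A B f -> f (gone A) = gone B.
Proof.
  intros Hf.
  assert (Hidem : f (gone A) = gmul B (f (gone A)) (f (gone A))).
  { rewrite <- Hf, gmul1l; reflexivity. }
  rewrite <- (gmul1l B (f (gone A))), <- (gmulVl B (f (gone A))).
  rewrite <- gmulA, <- Hidem. reflexivity.
Qed.

Lemma hom_inv (A B : group) (f : A -> B) (x : A) :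
  is_hom A B f -> f (ginv A x) = ginv B (f x).
Proof.
  intros Hf.
  assert (Hleft : gmul B (f (ginv A x)) (f x) = gone B).
  { rewrite <- Hf, gmulVl. apply hom_one; assumption. }
  rewrite <- (gmul1r B (f (ginv A x))), <- (gmulVr B (f x)).
  rewrite gmulA, Hleft, gmul1l. reflexivity.
Qed.

Section ClassOfMaps.

Variables (C : subcat) (H : maps).
Hypothesis HC : class_of_maps C H.

Lemma class_map_is_hom {A B f} : H A B f -> is_hom A B f.
Proof. intros Hf. apply (hom_is_hom C), (proj1 HC), Hf. Qed.

Lemma class_map_ob_codom {A B f} : H A B f -> ob C B.
Proof. intros Hf. exact (proj2 (hom_ob C _ _ _ (proj1 HC _ _ _ Hf))). Qed.

Lemma class_map_id A : ob C A -> H A A (fun x => x).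
Proof.
  intros HA. apply (proj1 (proj2 HC)). split; [apply hom_id; assumption |].
  exists (fun x => x). split; [apply hom_id; assumption | split; reflexivity].
Qed.

Lemma class_map_nudge {A B B' f f'} :
  H A B f -> H A B' f' ->
  exists (D : group) (g : B -> D) (g' : B' -> D),
    H B D g /\ H B' D g' /\ forall a, g (f a) = g' (f' a).
Proof. apply (proj2 (proj2 (proj2 HC))). Qed.

Lemma class_map_comp {A B D f g} :
  H A B f -> H B D g -> H A D (fun x => g (f x)).
Proof. apply (proj1 (proj2 (proj2 HC))). Qed.

Variable G : subgroup_fun.

Lemma stab_of_mem {A a} : ob C A -> G A a -> stab H G A a.
Proof. intros HA Ha. exists A, (fun x => x). split; [apply class_map_id |]; assumption. Qed.

Hypotheses (HG : is_subgroup_function C G) (Hinv : invariant H G).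

Lemma stab_mul A x y :
  stab H G A x -> stab H G A y -> stab H G A (gmul A x y).
Proof.
  intros [B [f [Hf Hx]]] [B' [f' [Hf' Hy]]].
  destruct (class_map_nudge Hf Hf') as [D [g [g' [Hg [Hg' Hcomm]]]]].
  exists D, (fun a => g (f a)). split; [apply (class_map_comp Hf Hg) |].
  rewrite (class_map_is_hom Hf), (class_map_is_hom Hg).
  apply (HG _ (class_map_ob_codom Hg)).
  - apply (Hinv Hg), Hx.
  - rewrite Hcomm. apply (Hinv Hg'), Hy.
Qed.

Lemma stab_normal A : ob C A -> is_normal_subgroup A (stab H G A).
Proof.
  intros HA. split; [| split; [| split]].
  - apply stab_of_mem, HG; assumption.
  - apply stab_mul.
  - intros x [B [f [Hf Hx]]]. exists B, f. split; [assumption |].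
    rewrite (hom_inv _ (class_map_is_hom Hf)).
    apply (HG _ (class_map_ob_codom Hf)), Hx.
  - intros x a [B [f [Hf Ha]]]. exists B, f. split; [assumption |].
    rewrite !(class_map_is_hom Hf), (hom_inv _ (class_map_is_hom Hf)).
    apply (HG _ (class_map_ob_codom Hf)), Ha.
Qed.

Lemma stab_subgroup_function : is_subgroup_function C (stab H G).
Proof. exact stab_normal. Qed.

Lemma stab_invariant : invariant H (stab H G).
Proof.
  intros A B f Hf a [B' [g [Hg Ha]]].
  destruct (class_map_nudge Hf Hg) as [D [h [h' [Hh [Hh' Hcomm]]]]].
  exists D, h. split; [assumption |].
  rewrite Hcomm. apply (Hinv Hh'), Ha.
Qed.

End ClassOfMaps.

Lemma stab_mono {C : subcat} {H H' : maps} {G G' : subgroup_fun} {A a} :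
  class_of_maps C H' ->
  (forall A B f, H' A B f -> H A B f) ->
  (forall B, ob C B -> forall b, G' B b -> G B b) ->
  stab H' G' A a -> stab H G A a.
Proof.
  intros HC' HH HGG [B [f [Hf Ha]]]. exists B, f. split.
  - apply HH, Hf.
  - apply (HGG B (class_map_ob_codom HC' Hf)), Ha.
Qed.

Theorem proposition2p9 (C : subcat) :
  (forall (H : maps) (G : subgroup_fun),
     class_of_maps C H -> is_subgroup_function C G -> invariant H G ->
     is_subgroup_function C (stab H G) /\ invariant H (stab H G)) /\
  (forall (H : nat -> maps) (G : nat -> subgroup_fun),
     (forall n, class_of_maps C (H n)) ->
     (forall n A B f, H (S n) A B f -> H n A B f) ->
     is_series C G -> series_invariant H G ->
     is_series C (fun n => stab (H n) (G n)) /\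
     series_invariant H (fun n => stab (H n) (G n))).
Proof.
  split.
  - intros H G HC HG Hinv.
    split; [exact (stab_subgroup_function HC HG Hinv) | exact (stab_invariant HC Hinv)].
  - intros H G HC Hmon [HG [HG0 HGS]] Hinv.
    split; [split; [| split] |].
    + intros n. exact (stab_subgroup_function (HC n) (HG n) (Hinv n)).
    + intros A HA a. exact (stab_of_mem (HC 0) (G 0) HA (HG0 A HA a)).
    + intros n A _ a. apply (stab_mono (HC (S n))); auto.
    + intros n. exact (stab_invariant (HC n) (Hinv n)).
Qed.
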